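(* Let $\mathcal L_0$ be a sufficiently large constant such that for every $\mathcal L\ge\mathcal L_0$ the number of primes in $[\sqrt{\mathcal L},\sqrt{2\mathcal L}]$ exceeds $\frac{\sqrt{\mathcal L}}{2\log\mathcal L}$. Then for any $\mathcal L\ge\mathcal L_0$, any $M,N>0$ and any real $t$, $$S^\flat(M,N,t)\ll\frac{\log\mathcal L}{\sqrt{\mathcal L}}\left(S(M\mathcal L,N,t)+S(2M\mathcal L,N,t)+\sum_{\substack{\sqrt{\mathcal L}\le p\le\sqrt{2\mathcal L}\\ p\text{ prime}}}\frac{S^\flat(M,N/p,t)}{p^2}\right),$$ where the implied constant is absolute (in particular independent of $\mathcal L$).
   Context: For a nonzero integer $m$, $\chi_m(n)=\left(\frac mn\right)$ denotes the Kronecker symbol. $G$ is a fixed smooth non-negative function supported in $[3/4,2]$ such that for every integer $J\ge0$, $G(x)+G(x/2)+\dots+G(x/2^J)$ equals $1$ on $[1,3\cdot2^{J-1}]$ and is supported on $[3/4,2^{J+1}]$. Define $$S(M,N,t)=\sum_{\substack{M\le|m|<2M\\ m\text{ not a perfect square}}}\left|\sum_{n\ge1}\frac{\chi_m(n)}{n^{\frac12+it}}G\!\left(\frac nN\right)\right|^4,\qquad S^\flat(M,N,t)=\sum_{\substack{M\le|m|<2M\\ m\text{ fundamental discriminant}}}\left|\sum_{n\ge1}\frac{\chi_m(n)}{n^{\frac12+it}}G\!\left(\frac nN\right)\right|^4.$$ *)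

From Stdlib Require Import Reals ZArith Znumtheory List Lia Lra.
From Stdlib Require Import ClassicalDescription.
From Coquelicot Require Import Coquelicot.
Open Scope R_scope.

Definition ind (P : Prop) (x : R) : R :=
  if excluded_middle_informative P then x else 0.

Definition kron_prime (m : Z) (p : Z) : Z :=
  if Z.eqb p 2 then
    (if Z.eqb (Z.modulo m 2) 0 then 0%Z
     else if orb (Z.eqb (Z.modulo m 8) 1) (Z.eqb (Z.modulo m 8) 7) then 1%Z
     else (-1)%Z)
  else
    (let r := Z.modulo m p in
     if Z.eqb r 0 then 0%Z
     else if Z.eqb (Z.modulo (r ^ ((p - 1) / 2)) p) 1 then 1%Z else (-1)%Z).

Definition pval (p : Z) (n : nat) : nat :=
  List.length (List.filter
    (fun k => Z.eqb (Z.modulo (Z.of_nat n) (p ^ Z.of_nat k)) 0)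
    (List.seq 1 n)).

Definition kron (m : Z) (n : nat) : Z :=
  List.fold_right Z.mul 1%Z
    (List.map (fun q =>
       let p := Z.of_nat q in
       if prime_dec p then ((kron_prime m p) ^ Z.of_nat (pval p n))%Z else 1%Z)
     (List.seq 2 (n - 1))).

Definition perfect_square (m : Z) : Prop := exists k : Z, m = (k * k)%Z.

Definition Zsquarefree (m : Z) : Prop :=
  forall d : Z, Z.divide (d * d) m -> (d * d = 1)%Z.

(* fundamental discriminant = discriminant of a quadratic field (1 excluded) *)
Definition fund_disc (m : Z) : Prop :=
  m <> 1%Z /\
  ((Z.modulo m 4 = 1%Z /\ Zsquarefree m) \/
   (Z.modulo m 4 = 0%Z /\
    (Z.modulo (m / 4) 4 = 2%Z \/ Z.modulo (m / 4) 4 = 3%Z) /\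
    Zsquarefree (m / 4))).

Definition smooth (f : R -> R) : Prop :=
  forall (k : nat) (x : R), ex_derive_n f k x.

Definition admissible_G (G : R -> R) : Prop :=
  smooth G /\
  (forall x, 0 <= G x) /\
  (forall x, G x <> 0 -> 3/4 <= x <= 2) /\
  (forall (J : nat) (x : R),
     1 <= x <= 3 * 2 ^ J / 2 ->
     sum_n (fun j => G (x / 2 ^ j)) J = 1) /\
  (forall (J : nat) (x : R),
     sum_n (fun j => G (x / 2 ^ j)) J <> 0 -> 3/4 <= x <= 2 ^ (S J)).

Definition sumZ (a b : Z) (f : Z -> R) : R :=
  List.fold_right Rplus 0
    (List.map (fun k => f (a + Z.of_nat k)%Z)
       (List.seq 0 (Z.to_nat (b - a + 1)))).

(* n^{-(1/2 + i t)} for n >= 1 *)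
Definition npow_s (n : nat) (t : R) : C :=
  ( / sqrt (INR n) * cos (t * ln (INR n)),
   - (/ sqrt (INR n) * sin (t * ln (INR n))) ).

(* sum_{n >= 1} chi_m(n) n^{-1/2-it} G(n/N).  Since G is supported in
   [3/4,2], only n <= 2N contribute; we sum n = 1 .. up(2N)+1 which
   contains all of them. *)
Definition char_sum (G : R -> R) (m : Z) (N t : R) : C :=
  sum_n (fun k =>
     Cmult (RtoC (IZR (kron m (S k)) * G (INR (S k) / N))) (npow_s (S k) t))
    (Z.to_nat (up (2 * N))).

Definition S_all (G : R -> R) (M N t : R) : R :=
  sumZ (- up (2 * M)) (up (2 * M)) (fun m =>
    ind (M <= IZR (Z.abs m) < 2 * M /\ ~ perfect_square m)
        (Cmod (char_sum G m N t) ^ 4)).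

Definition S_flat (G : R -> R) (M N t : R) : R :=
  sumZ (- up (2 * M)) (up (2 * M)) (fun m =>
    ind (M <= IZR (Z.abs m) < 2 * M /\ fund_disc m)
        (Cmod (char_sum G m N t) ^ 4)).

Definition prime_sum (L : R) (f : R -> R) : R :=
  sumZ 0 (up (sqrt (2 * L))) (fun p =>
    ind (prime p /\ sqrt L <= IZR p <= sqrt (2 * L)) (f (IZR p))).

Definition prime_count (L : R) : R := prime_sum L (fun _ => 1).

(* For a fundamental discriminant m and a prime p, chi_{m p^2}(n) equals chi_m(n) when p does
   not divide n and vanishes otherwise, and chi_m is completely multiplicative in n. Hence the
   character sum of length N splits as
     Sigma_m(N) = Sigma_{m p^2}(N) + chi_m(p) p^(-1/2-it) Sigma_m(N/p),
   and (a + b)^4 <= 8 (a^4 + b^4) gives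
     |Sigma_m(N)|^4 <= 8 (|Sigma_{m p^2}(N)|^4 + |Sigma_m(N/p)|^4 / p^2).
   Average over the more than sqrt L / (2 log L) primes p in [sqrt L, sqrt (2L)] and sum over m.
   The numbers m p^2 are non-squares with ML <= |m p^2| < 4ML, pairwise distinct because no
   fundamental discriminant is divisible by the square of an odd prime, so the first terms add
   up to at most S(ML,N,t) + S(2ML,N,t); the second terms give the sum of S^flat(M,N/p,t)/p^2. *)

From Pilot Require Import Defs.
From Stdlib Require Import Reals.
From Coquelicot Require Import Coquelicot.
Open Scope R_scope.

From Stdlib Require Import ZArith Znumtheory Zpow_facts List Lia Lra Psatz.
From Stdlib Require Import Classical_Prop ClassicalDescription.
From mathcomp Require ssreflect ssrbool ssrnat div prime binomial zify.

Set Bullet Behavior "Strict Subproofs".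

Module Fermat.
Import ssreflect ssrbool ssrnat div prime binomial zify.

Lemma prime_of_Zprime (p : nat) : Znumtheory.prime (Z.of_nat p) -> prime p.
Proof.
move=> Hp; have Hp2 := prime_ge_2 _ Hp.
apply/primeP; split=> [|d /dvdnP [k Hk]]; first lia.
have Hd : (Z.of_nat d | Z.of_nat p)%Z by exists (Z.of_nat k); lia.
by case: (prime_divisors _ Hp _ Hd) => [|[|[|]]] ?; apply/orP; lia.
Qed.

Lemma modn_Nat_mod (m d : nat) : (0 < d)%N -> m %% d = Nat.modulo m d.
Proof. by move=> Hd; apply: (Nat.mod_unique _ _ (m %/ d)); lia. Qed.

Lemma Zfermat_little_nonneg (p a : Z) :
  Znumtheory.prime p -> (0 <= a)%Z -> (a ^ p mod p = a mod p)%Z.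
Proof.
move=> Hp Ha; have Hp2 := prime_ge_2 _ Hp.
rewrite -(Z2Nat.id a) // -(Z2Nat.id p) in Hp *; try lia.
have -> : (Z.of_nat (Z.to_nat a) ^ Z.of_nat (Z.to_nat p)
           = Z.of_nat (Z.to_nat a ^ Z.to_nat p))%Z by lia.
rewrite -!Nat2Z.inj_mod -!modn_Nat_mod; try lia.
by rewrite fermat_little // prime_of_Zprime.
Qed.

End Fermat.

Open Scope Z_scope.

Lemma Zfermat_little (p a : Z) : prime p -> a ^ p mod p = a mod p.
Proof.
  intros Hp. pose proof (prime_ge_2 _ Hp).
  rewrite <- Z.mod_pow_l, Fermat.Zfermat_little_nonneg, Z.mod_mod; auto; try lia.
  apply Z.mod_pos_bound; lia.
Qed.

Lemma Zfermat_little_pred (p a : Z) : prime p -> ~ (p | a) -> a ^ (p - 1) mod p = 1.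
Proof.
  intros Hp Ha. pose proof (prime_ge_2 _ Hp).
  assert (Hdiv : (p | a * (a ^ (p - 1) - 1))).
  { apply Z.mod_divide; [lia|].
    replace (a * (a ^ (p - 1) - 1)) with (a ^ p - a).
    - rewrite Zminus_mod, Zfermat_little, Z.sub_diag by auto. reflexivity.
    - replace p with (Z.succ (p - 1)) at 1 by lia.
      rewrite Z.pow_succ_r by lia. ring. }
  apply Gauss in Hdiv; [| apply prime_rel_prime; auto].
  destruct Hdiv as [k Hk].
  replace (a ^ (p - 1)) with (1 + k * p) by lia.
  rewrite Z_mod_plus_full. apply Z.mod_small. lia.
Qed.

Lemma Zmul_mod_1_r (x y n : Z) : y mod n = 1 -> (x * y) mod n = x mod n.
Proof. intros H. rewrite Zmult_mod, H, Z.mul_1_r, Zmod_mod. reflexivity. Qed.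

Lemma prime_odd (p : Z) : prime p -> p <> 2 -> p mod 2 = 1.
Proof.
  intros Hp Hp2. pose proof (Z.mod_pos_bound p 2 ltac:(lia)).
  destruct (Z.eq_dec (p mod 2) 0) as [E|E]; [|lia].
  apply Z.mod_divide in E; [|lia].
  apply prime_div_prime in E; [lia | apply prime_2 | auto].
Qed.

Lemma odd_sq_mod8 (p : Z) : p mod 2 = 1 -> (p * p) mod 8 = 1.
Proof.
  intros H. rewrite Zmult_mod.
  assert (p mod 8 = 1 \/ p mod 8 = 3 \/ p mod 8 = 5 \/ p mod 8 = 7)
    as [E|[E|[E|E]]] by (pose proof (Z.mod_pos_bound p 8); Z.div_mod_to_equations; lia);
    rewrite E; reflexivity.
Qed.

Lemma prime_dvd_mul_sq (p q m : Z) : prime p -> prime q -> q <> p ->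
  (q | m * (p * p)) <-> (q | m).
Proof.
  intros Hp Hq Hne. split; [|apply Z.divide_mul_l].
  intros Hd. apply prime_mult in Hd as [Hd|Hd]; auto.
  apply prime_mult in Hd as [Hd|Hd]; auto;
    apply prime_div_prime in Hd; tauto.
Qed.

Lemma kron_prime_range (m q : Z) : -1 <= kron_prime m q <= 1.
Proof.
  unfold kron_prime; cbv zeta.
  repeat match goal with |- context [if ?b then _ else _] => destruct b end; lia.
Qed.

Lemma kron_prime_mul_sq_self (m p : Z) : prime p -> kron_prime (m * (p * p)) p = 0.
Proof.
  intros Hp. pose proof (prime_ge_2 _ Hp).
  replace (m * (p * p)) with (m * p * p) by ring.
  unfold kron_prime.
  destruct (Z.eqb_spec p 2) as [->|_]; cbv zeta; rewrite Z.mod_mul by lia; reflexivity.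
Qed.

Lemma kron_prime_mul_sq (m p q : Z) : prime p -> prime q -> q <> p ->
  kron_prime (m * (p * p)) q = kron_prime m q.
Proof.
  intros Hp Hq Hne. pose proof (prime_ge_2 _ Hq).
  unfold kron_prime. destruct (Z.eqb_spec q 2) as [->|Hq2].
  - assert (Hodd : p mod 2 = 1) by (apply prime_odd; auto).
    rewrite (Zmul_mod_1_r m _ 2), (Zmul_mod_1_r m _ 8); auto using odd_sq_mod8.
    rewrite Zmul_mod_1_r; auto.
  - cbv zeta. set (e := (q - 1) / 2).
    assert (He : q - 1 = 2 * e)
      by (pose proof (prime_odd q Hq Hq2); unfold e; Z.div_mod_to_equations; lia).
    assert (Hzero : ((m * (p * p)) mod q =? 0) = (m mod q =? 0)).
    { apply Bool.eq_iff_eq_true. rewrite !Z.eqb_eq, !Z.mod_divide by lia.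
      apply prime_dvd_mul_sq; auto. }
    assert (Hpow : ((m * (p * p)) mod q) ^ e mod q = (m mod q) ^ e mod q).
    { rewrite !Z.mod_pow_l, Z.pow_mul_l, <- Z.pow_2_r, <- Z.pow_mul_r, <- He by lia.
      apply Zmul_mod_1_r, Zfermat_little_pred; auto.
      intros Hd. apply prime_div_prime in Hd; auto. }
    rewrite Hzero, Hpow. reflexivity.
Qed.

Definition pow_dvdb (p : Z) (n k : nat) : bool :=
  Z.of_nat n mod p ^ Z.of_nat k =? 0.

Lemma pow_dvdbP (p : Z) (n k : nat) : 2 <= p ->
  pow_dvdb p n k = true <-> (p ^ Z.of_nat k | Z.of_nat n).
Proof.
  intros Hp. unfold pow_dvdb. rewrite Z.eqb_eq.
  apply Z.mod_divide, Z.pow_nonzero; lia.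
Qed.

Lemma pow_dvdb_lt (p : Z) (n k : nat) : 2 <= p -> (1 <= n)%nat ->
  pow_dvdb p n k = true -> (k < n)%nat.
Proof.
  intros Hp Hn Hk. apply pow_dvdbP, Z.divide_pos_le in Hk; [|lia|lia].
  pose proof (Z.pow_gt_lin_r p (Z.of_nat k) ltac:(lia) ltac:(lia)). lia.
Qed.

Lemma pval_spec (p : Z) (n B : nat) : 2 <= p -> (1 <= n)%nat -> (n <= B)%nat ->
  pval p n = length (filter (pow_dvdb p n) (seq 1 B)).
Proof.
  intros Hp Hn HB. unfold pval. fold (pow_dvdb p n).
  replace B with (n + (B - n))%nat by lia.
  rewrite seq_app, filter_app, length_app.
  rewrite (filter_ext_in _ (fun _ => false) (seq (1 + n) _)), filter_false; [simpl; lia|].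
  intros k Hk. apply in_seq in Hk.
  destruct (pow_dvdb p n k) eqn:E; auto. apply pow_dvdb_lt in E; lia.
Qed.

Lemma pval_not_dvd (p : Z) (n : nat) : 2 <= p -> ~ (p | Z.of_nat n) -> pval p n = 0%nat.
Proof.
  intros Hp Hd. unfold pval. fold (pow_dvdb p n).
  rewrite (filter_ext_in _ (fun _ => false)), filter_false; auto.
  intros k Hk. apply in_seq in Hk.
  destruct (pow_dvdb p n k) eqn:E; auto. exfalso.
  apply pow_dvdbP in E; auto. apply Hd, (Z.divide_trans _ (p ^ Z.of_nat k)); auto.
  replace (Z.of_nat k) with (Z.succ (Z.of_nat k - 1)) by lia.
  rewrite Z.pow_succ_r by lia. apply Z.divide_factor_l.
Qed.

Lemma pval_pos (p : Z) (n : nat) : 2 <= p -> (1 <= n)%nat -> (p | Z.of_nat n) ->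
  (1 <= pval p n)%nat.
Proof.
  intros Hp Hn Hd. unfold pval. fold (pow_dvdb p n).
  assert (H1 : pow_dvdb p n 1 = true) by (apply pow_dvdbP; [lia | now rewrite Z.pow_1_r]).
  replace n with (S (n - 1)) at 2 by lia. cbn [seq filter]. rewrite H1. simpl. lia.
Qed.

Lemma pval_mul_other (q : Z) (p n : nat) : prime q -> prime (Z.of_nat p) -> q <> Z.of_nat p ->
  (1 <= n)%nat -> pval q (p * n) = pval q n.
Proof.
  intros Hq Hp Hne Hn. pose proof (prime_ge_2 _ Hq). pose proof (prime_ge_2 _ Hp).
  rewrite (pval_spec q n (p * n)), (pval_spec q (p * n) (p * n)) by nia.
  f_equal. apply filter_ext. intros k.
  apply Bool.eq_iff_eq_true. rewrite !pow_dvdbP, Nat2Z.inj_mul by lia.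
  split; [|apply Z.divide_mul_r].
  intros Hd. apply Gauss with (Z.of_nat p); auto.
  apply rel_prime_sym, rel_prime_Zpower_r; [lia|].
  apply rel_prime_sym, prime_rel_prime; auto.
  intros Hqp. apply prime_div_prime in Hqp; auto.
Qed.

Lemma pval_mul_self (p n : nat) : prime (Z.of_nat p) -> (1 <= n)%nat ->
  pval (Z.of_nat p) (p * n) = S (pval (Z.of_nat p) n).
Proof.
  intros Hp Hn. pose proof (prime_ge_2 _ Hp).
  unfold pval at 1. fold (pow_dvdb (Z.of_nat p) (p * n)).
  assert (H1 : pow_dvdb (Z.of_nat p) (p * n) 1 = true).
  { apply pow_dvdbP; auto. rewrite Z.pow_1_r, Nat2Z.inj_mul. apply Z.divide_factor_l. }
  replace (p * n)%nat with (S (p * n - 1)) at 2 by nia. cbn [seq filter]. rewrite H1.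
  rewrite <- seq_shift, filter_map_swap. cbn [length]. rewrite length_map.
  rewrite (pval_spec _ n (p * n - 1)) by nia.
  f_equal. f_equal. apply filter_ext. intros k.
  apply Bool.eq_iff_eq_true. rewrite !pow_dvdbP by lia.
  rewrite Nat2Z.inj_mul, Nat2Z.inj_succ, Z.pow_succ_r by lia.
  apply Z.mul_divide_cancel_l. lia.
Qed.

Definition Zprod (l : list Z) : Z := fold_right Z.mul 1 l.

Lemma Zprod_app (l1 l2 : list Z) : Zprod (l1 ++ l2) = Zprod l1 * Zprod l2.
Proof.
  unfold Zprod. induction l1 as [|a l1 IH]; cbn [fold_right app]; [ring|].
  rewrite IH. ring.
Qed.

Lemma Zprod_map_mul {A} (f g : A -> Z) (l : list A) :
  Zprod (map (fun x => f x * g x) l) = Zprod (map f l) * Zprod (map g l).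
Proof.
  unfold Zprod. induction l as [|a l IH]; cbn [fold_right map]; [ring|].
  rewrite IH. ring.
Qed.

Lemma Zprod_map_1 {A} (f : A -> Z) (l : list A) :
  (forall x, In x l -> f x = 1) -> Zprod (map f l) = 1.
Proof.
  unfold Zprod. induction l as [|a l IH]; cbn [fold_right map]; intros H; auto.
  rewrite H, IH; [reflexivity | intros x Hx; apply H; now right | now left].
Qed.

Lemma Zprod_map_0 {A} (f : A -> Z) (l : list A) (x : A) :
  In x l -> f x = 0 -> Zprod (map f l) = 0.
Proof.
  unfold Zprod. induction l as [|a l IH]; cbn [fold_right map]; intros Hx Hf; [contradiction|].
  destruct Hx as [<-|Hx]; [rewrite Hf|rewrite IH]; auto; ring.
Qed.

Lemma Zprod_map_single (l : list nat) (p : nat) (c : Z) : NoDup l -> In p l ->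
  Zprod (map (fun q => if Nat.eqb q p then c else 1) l) = c.
Proof.
  unfold Zprod. induction 1 as [|a l Ha Hl IH]; cbn [fold_right map]; intros Hp;
    [contradiction|].
  destruct (Nat.eqb_spec a p) as [<-|Hne].
  - rewrite Zprod_map_1; [ring|]. intros q Hq.
    destruct (Nat.eqb_spec q a); congruence.
  - rewrite IH; [ring|]. destruct Hp; congruence.
Qed.

Definition kron_factor (m : Z) (n q : nat) : Z :=
  if prime_dec (Z.of_nat q)
  then kron_prime m (Z.of_nat q) ^ Z.of_nat (pval (Z.of_nat q) n) else 1.

Lemma kron_spec (m : Z) (n B : nat) : (1 <= n)%nat -> (n - 1 <= B)%nat ->
  kron m n = Zprod (map (kron_factor m n) (seq 2 B)).
Proof.
  intros Hn HB. change (kron m n) with (Zprod (map (kron_factor m n) (seq 2 (n - 1)))).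
  replace B with ((n - 1) + (B - (n - 1)))%nat by lia.
  rewrite seq_app, map_app, Zprod_app, (Zprod_map_1 _ (seq (2 + (n - 1)) _)); [ring|].
  intros q Hq. apply in_seq in Hq. unfold kron_factor.
  destruct (prime_dec (Z.of_nat q)); auto.
  rewrite pval_not_dvd; [reflexivity|lia|].
  intros Hd. apply Z.divide_pos_le in Hd; lia.
Qed.

Lemma Nat_mod_eqb_0_iff (n p : nat) : (1 < p)%nat ->
  Nat.eqb (n mod p) 0 = true <-> (Z.of_nat p | Z.of_nat n).
Proof.
  intros Hp. rewrite Nat.eqb_eq, <- Z.mod_divide, <- Nat2Z.inj_mod by lia. lia.
Qed.

Lemma kron_mul_sq (m : Z) (p n : nat) : prime (Z.of_nat p) -> (1 <= n)%nat ->
  kron (m * (Z.of_nat p * Z.of_nat p)) n = if Nat.eqb (n mod p) 0 then 0 else kron m n.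
Proof.
  intros Hp Hn. pose proof (prime_ge_2 _ Hp).
  rewrite !(kron_spec _ n (n - 1)) by lia.
  destruct (Nat.eqb (n mod p) 0) eqn:E.
  - apply Nat_mod_eqb_0_iff in E; [|lia].
    apply (Zprod_map_0 _ _ p).
    + apply in_seq. apply Z.divide_pos_le in E; lia.
    + unfold kron_factor. destruct (prime_dec (Z.of_nat p)); [|contradiction].
      rewrite kron_prime_mul_sq_self by auto. apply Z.pow_0_l.
      pose proof (pval_pos (Z.of_nat p) n ltac:(lia) Hn E). lia.
  - f_equal. apply map_ext. intros q. unfold kron_factor.
    destruct (prime_dec (Z.of_nat q)) as [Hq|Hq]; auto.
    destruct (Nat.eq_dec q p) as [->|Hne].
    + rewrite pval_not_dvd; [reflexivity | lia |].
      rewrite <- Nat_mod_eqb_0_iff by lia. congruence.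
    + rewrite kron_prime_mul_sq; auto. lia.
Qed.

Lemma kron_mul_prime (m : Z) (p n : nat) : prime (Z.of_nat p) -> (1 <= n)%nat ->
  kron m (p * n) = kron_prime m (Z.of_nat p) * kron m n.
Proof.
  intros Hp Hn. pose proof (prime_ge_2 _ Hp).
  rewrite (kron_spec m (p * n) (p * n - 1)), (kron_spec m n (p * n - 1)) by nia.
  rewrite (map_ext (kron_factor m (p * n))
    (fun q => kron_factor m n q * if Nat.eqb q p then kron_prime m (Z.of_nat p) else 1)).
  - rewrite Zprod_map_mul, Zprod_map_single; [ring | apply seq_NoDup | apply in_seq; nia].
  - intros q. unfold kron_factor. destruct (Nat.eqb_spec q p) as [->|Hne].
    + destruct (prime_dec (Z.of_nat p)); [|contradiction].
      rewrite pval_mul_self, Nat2Z.inj_succ, Z.pow_succ_r by (auto; lia). ring.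
    + destruct (prime_dec (Z.of_nat q)); [|ring].
      rewrite pval_mul_other by (auto; lia). ring.
Qed.

Lemma rel_prime_sq (a b : Z) : rel_prime a b -> rel_prime (a * a) (b * b).
Proof.
  intros H. apply rel_prime_sym.
  apply rel_prime_mult; apply rel_prime_sym, rel_prime_mult; auto.
Qed.

Lemma fund_disc_odd_sq_free (m q : Z) : fund_disc m -> prime q -> q <> 2 -> ~ (q * q | m).
Proof.
  intros [_ [[_ Hsf] | [H4 [_ Hsf]]]] Hq Hq2 Hd; pose proof (prime_ge_2 _ Hq).
  - apply Hsf in Hd. nia.
  - assert (Hm : m = 4 * (m / 4)) by (Z.div_mod_to_equations; lia).
    rewrite Hm in Hd. apply Gauss in Hd.
    + apply Hsf in Hd. nia.
    + apply rel_prime_sym, (rel_prime_sq 2 q), prime_rel_prime; [apply prime_2|].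
      intros Hd2. apply prime_div_prime in Hd2; auto using prime_2.
Qed.

Lemma sq_mod16 (k : Z) : (k * k) mod 16 = 0 \/ (k * k) mod 16 = 1 \/
  (k * k) mod 16 = 4 \/ (k * k) mod 16 = 9.
Proof.
  rewrite Zmult_mod. pose proof (Z.mod_pos_bound k 16 ltac:(lia)).
  remember (k mod 16) as r eqn:E; clear E.
  assert (r = 0 \/ r = 1 \/ r = 2 \/ r = 3 \/ r = 4 \/ r = 5 \/ r = 6 \/ r = 7 \/ r = 8 \/
          r = 9 \/ r = 10 \/ r = 11 \/ r = 12 \/ r = 13 \/ r = 14 \/ r = 15) by lia.
  repeat match goal with H : _ \/ _ |- _ => destruct H as [->|H] end; subst; cbv; tauto.
Qed.

Lemma fund_disc_not_square (m : Z) : fund_disc m -> ~ perfect_square m.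
Proof.
  intros [Hm1 [[_ Hsf] | [H4 [H4' _]]]] [k Hk].
  - assert (Hd : (k * k | m)) by (exists 1; lia). apply Hsf in Hd. lia.
  - assert (m mod 16 = 8 \/ m mod 16 = 12) by (Z.div_mod_to_equations; lia).
    pose proof (sq_mod16 k). rewrite <- Hk in *. lia.
Qed.

Lemma fund_disc_mul_sq_not_square (m p : Z) : fund_disc m -> prime p ->
  ~ perfect_square (m * (p * p)).
Proof.
  intros Hm Hp [k Hk]. pose proof (prime_ge_2 _ Hp).
  assert (Hd : (p | k * k)) by (exists (m * p); lia).
  apply prime_mult in Hd as [[j Hj]|[j Hj]]; auto; subst k;
    apply (fund_disc_not_square m Hm); exists j; nia.
Qed.

Lemma fund_disc_mul_sq_inj (m1 m2 p1 p2 : Z) : fund_disc m1 -> fund_disc m2 ->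
  prime p1 -> prime p2 -> m1 * (p1 * p1) = m2 * (p2 * p2) -> m1 = m2 /\ p1 = p2.
Proof.
  intros H1 H2 Hp1 Hp2 E. pose proof (prime_ge_2 _ Hp1). pose proof (prime_ge_2 _ Hp2).
  destruct (Z.eq_dec p1 p2) as [<-|Hne]; [split; nia|].
  exfalso.
  assert (Hr : rel_prime (p1 * p1) (p2 * p2)).
  { apply rel_prime_sq, prime_rel_prime; auto.
    intros Hd. apply prime_div_prime in Hd; auto. }
  destruct (Z.eq_dec p1 2) as [->|Hn1].
  - apply (fund_disc_odd_sq_free m1 p2); auto.
    apply Gauss with (2 * 2); [exists m2; lia | now apply rel_prime_sym].
  - apply (fund_disc_odd_sq_free m2 p1); auto.
    apply Gauss with (p2 * p2); auto. exists m1; lia.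
Qed.

Close Scope Z_scope.

Lemma sum_n_m_zero_tail {G : AbelianMonoid} (a : nat -> G) (n m k : nat) :
  (n <= S m)%nat -> (m <= k)%nat -> (forall j, (m < j <= k)%nat -> a j = zero) ->
  sum_n_m a n k = sum_n_m a n m.
Proof.
  intros Hnm Hmk Ha. rewrite (sum_n_m_Chasles a n m k) by auto.
  rewrite (sum_n_m_ext_loc a (fun _ => zero) (S m) k), sum_n_m_const_zero, plus_zero_r; auto.
Qed.

Lemma sum_n_m_multiples {G : AbelianMonoid} (a : nat -> G) (p J : nat) : (1 <= p)%nat ->
  sum_n_m (fun n => if Nat.eqb (n mod p) 0 then a n else zero) 1 (p * J) =
  sum_n_m (fun j => a (p * j)%nat) 1 J.
Proof.
  intros Hp. induction J as [|J IH].
  - rewrite Nat.mul_0_r, !sum_n_m_zero by lia. reflexivity.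
  - replace (p * S J)%nat with (S (p * J + (p - 1))) by lia.
    rewrite !sum_n_Sm by lia.
    replace (S (p * J + (p - 1))) with (S J * p)%nat by lia.
    rewrite Nat.Div0.mod_mul, Nat.eqb_refl, (Nat.mul_comm (S J) p).
    rewrite (sum_n_m_zero_tail _ 1 (p * J)), IH; [reflexivity | lia | lia |].
    intros j Hj. destruct (Nat.eqb_spec (j mod p) 0) as [E|]; auto.
    exfalso. apply Nat.Div0.mod_divides in E as [c ->]. destruct (Nat.le_gt_cases c J); nia.
Qed.

Definition char_term (G : R -> R) (m : Z) (N t : R) (n : nat) : C :=
  Cmult (RtoC (IZR (kron m n) * G (INR n / N))) (npow_s n t).

Lemma char_term_vanish (G : R -> R) (m : Z) (N t : R) (n : nat) :
  admissible_G G -> 0 < N -> 2 * N < INR n -> char_term G m N t n = 0%C.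
Proof.
  intros (_ & _ & HG & _) HN Hn. unfold char_term.
  destruct (Req_dec (G (INR n / N)) 0) as [->|H0].
  - rewrite Rmult_0_r. apply Cmult_0_l.
  - apply HG in H0.
    assert (INR n / N * N = INR n) by (field; lra). nra.
Qed.

Lemma char_sum_trunc (G : R -> R) (m : Z) (N t : R) (B : nat) :
  admissible_G G -> 0 < N -> (S (Z.to_nat (up (2 * N))) <= B)%nat ->
  char_sum G m N t = sum_n_m (char_term G m N t) 1 B.
Proof.
  intros HG HN HB. destruct (archimed (2 * N)) as [Hup _].
  assert (Hup0 : (0 < up (2 * N))%Z) by (apply lt_IZR; lra).
  rewrite (sum_n_m_zero_tail _ 1 (S (Z.to_nat (up (2 * N))))); [| lia | lia |].
  - exact (sum_n_m_S (char_term G m N t) 0 _).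
  - intros j Hj. apply char_term_vanish; auto.
    apply Rlt_le_trans with (IZR (up (2 * N))); [lra|].
    rewrite INR_IZR_INZ. apply IZR_le. lia.
Qed.

Lemma npow_s_mul (p n : nat) (t : R) : (1 <= p)%nat -> (1 <= n)%nat ->
  npow_s (p * n) t = (npow_s p t * npow_s n t)%C.
Proof.
  intros Hp Hn. assert (0 < INR p) by (apply lt_0_INR; lia).
  assert (0 < INR n) by (apply lt_0_INR; lia).
  assert (0 < sqrt (INR p)) by (apply sqrt_lt_R0; lra).
  assert (0 < sqrt (INR n)) by (apply sqrt_lt_R0; lra).
  unfold npow_s, Cmult; simpl.
  rewrite mult_INR, sqrt_mult, ln_mult, Rmult_plus_distr_l, cos_plus, sin_plus by lra.
  f_equal; field; lra.
Qed.

Lemma Cmod_npow_s (n : nat) (t : R) : (1 <= n)%nat -> Cmod (npow_s n t) = / sqrt (INR n).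
Proof.
  intros Hn. assert (0 < sqrt (INR n)) by (apply sqrt_lt_R0, lt_0_INR; lia).
  unfold Cmod, npow_s; cbn [fst snd].
  set (a := / sqrt (INR n)). set (x := t * ln (INR n)).
  replace ((a * cos x) ^ 2 + (- (a * sin x)) ^ 2) with (Rsqr a).
  - apply sqrt_Rsqr. left. apply Rinv_0_lt_compat. lra.
  - rewrite <- (Rmult_1_r (Rsqr a)), <- (sin2_cos2 x). unfold Rsqr. ring.
Qed.

Lemma char_term_mul_sq_split (G : R -> R) (m : Z) (N t : R) (p n : nat) :
  prime (Z.of_nat p) -> (1 <= n)%nat ->
  char_term G m N t n = (char_term G (m * (Z.of_nat p * Z.of_nat p)) N t n +
    if Nat.eqb (n mod p) 0 then char_term G m N t n else 0)%C.
Proof.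
  intros Hp Hn. unfold char_term at 2. rewrite kron_mul_sq by auto.
  destruct (Nat.eqb (n mod p) 0).
  - rewrite Rmult_0_l, Cmult_0_l, Cplus_0_l. reflexivity.
  - rewrite Cplus_0_r. reflexivity.
Qed.

Lemma char_term_mul_prime (G : R -> R) (m : Z) (N t : R) (p n : nat) :
  prime (Z.of_nat p) -> (1 <= n)%nat -> 0 < N ->
  char_term G m N t (p * n) =
  (RtoC (IZR (kron_prime m (Z.of_nat p))) * npow_s p t * char_term G m (N / INR p) t n)%C.
Proof.
  intros Hp Hn HN. pose proof (prime_ge_2 _ Hp).
  assert (0 < INR p) by (apply lt_0_INR; lia).
  unfold char_term. rewrite kron_mul_prime, npow_s_mul, mult_IZR by (auto; lia).
  replace (INR (p * n) / N) with (INR n / (N / INR p)) by (rewrite mult_INR; field; lra).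
  rewrite !RtoC_mult. ring.
Qed.

Lemma char_sum_split (G : R -> R) (m : Z) (N t : R) (p : nat) :
  admissible_G G -> 0 < N -> prime (Z.of_nat p) ->
  char_sum G m N t =
  (char_sum G (m * (Z.of_nat p * Z.of_nat p)) N t +
   RtoC (IZR (kron_prime m (Z.of_nat p))) * npow_s p t * char_sum G m (N / INR p) t)%C.
Proof.
  intros HG HN Hp. pose proof (prime_ge_2 _ Hp).
  assert (Hp0 : 0 < INR p) by (apply lt_0_INR; lia).
  set (c := (RtoC (IZR (kron_prime m (Z.of_nat p))) * npow_s p t)%C).
  set (B1 := S (Z.to_nat (up (2 * N)))).
  set (B2 := S (Z.to_nat (up (2 * (N / INR p))))).
  pose proof (Nat.le_max_l B1 B2). pose proof (Nat.le_max_r B1 B2).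
  set (J := Nat.max B1 B2) in *.
  rewrite (char_sum_trunc G m N t (p * J)), (char_sum_trunc _ _ N t (p * J)),
    (char_sum_trunc G m (N / INR p) t J)
    by first [assumption | apply Rdiv_lt_0_compat; lra | nia].
  rewrite (sum_n_m_ext_loc _ (fun n =>
      plus (char_term G (m * (Z.of_nat p * Z.of_nat p)) N t n)
           (if Nat.eqb (n mod p) 0 then char_term G m N t n else zero)))
    by (intros n Hn; apply char_term_mul_sq_split; auto; lia).
  rewrite sum_n_m_plus, sum_n_m_multiples by lia.
  rewrite (sum_n_m_ext_loc (fun n => char_term G m N t (p * n))
      (fun n => mult c (char_term G m (N / INR p) t n)))
    by (intros n Hn; apply char_term_mul_prime; auto; lia).
  apply (f_equal2 Cplus); [reflexivity | apply (@sum_n_m_mult_l C_Ring)].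
Qed.

Lemma pow4_le_add (x y z : R) : 0 <= x -> 0 <= y -> 0 <= z -> x <= y + z ->
  x ^ 4 <= 8 * (y ^ 4 + z ^ 4).
Proof.
  intros Hx Hy Hz Hxyz.
  assert (x ^ 4 <= (y + z) ^ 4) by (apply pow_incr; lra).
  assert (0 <= (y - z) ^ 2 * (7 * y ^ 2 + 10 * y * z + 7 * z ^ 2))
    by (apply Rmult_le_pos; [apply pow2_ge_0 | nra]).
  nra.
Qed.

Lemma char_sum_pow4_le (G : R -> R) (m : Z) (N t : R) (p : nat) :
  admissible_G G -> 0 < N -> prime (Z.of_nat p) ->
  Cmod (char_sum G m N t) ^ 4 <=
  8 * (Cmod (char_sum G (m * (Z.of_nat p * Z.of_nat p)) N t) ^ 4 +
       Cmod (char_sum G m (N / INR p) t) ^ 4 / INR p ^ 2).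
Proof.
  intros HG HN Hp. pose proof (prime_ge_2 _ Hp).
  assert (Hp0 : 0 < INR p) by (apply lt_0_INR; lia).
  assert (Hsq : 0 < sqrt (INR p)) by (apply sqrt_lt_R0; lra).
  set (S' := char_sum G m (N / INR p) t).
  assert (E : sqrt (INR p) ^ 4 = INR p ^ 2)
    by (rewrite <- (pow2_sqrt (INR p)) at 2 by lra; ring).
  replace (Cmod S' ^ 4 / INR p ^ 2) with ((Cmod S' / sqrt (INR p)) ^ 4)
    by (rewrite <- E; field; lra).
  apply pow4_le_add; try apply Cmod_ge_0.
  - apply Rdiv_le_0_compat; [apply Cmod_ge_0 | lra].
  - rewrite (char_sum_split G m N t p) at 1 by auto.
    eapply Rle_trans; [apply Cmod_triangle | apply Rplus_le_compat_l].
    rewrite !Cmod_mult, Cmod_R, Cmod_npow_s by lia.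
    assert (Rabs (IZR (kron_prime m (Z.of_nat p))) <= 1).
    { pose proof (kron_prime_range m (Z.of_nat p)) as [Hl Hu].
      apply IZR_le in Hl, Hu. apply Rabs_le. lra. }
    assert (0 <= / sqrt (INR p) * Cmod S')
      by (apply Rmult_le_pos; [left; apply Rinv_0_lt_compat; lra | apply Cmod_ge_0]).
    fold S'. unfold Rdiv. nra.
Qed.

Definition lsum {A} (l : list A) (f : A -> R) : R := fold_right Rplus 0 (map f l).

Lemma lsum_app {A} (l1 l2 : list A) (f : A -> R) : lsum (l1 ++ l2) f = lsum l1 f + lsum l2 f.
Proof. unfold lsum. induction l1 as [|a l1 IH]; simpl; [ring|]. rewrite IH. ring. Qed.

Lemma lsum_plus {A} (l : list A) (f g : A -> R) :
  lsum l (fun x => f x + g x) = lsum l f + lsum l g.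
Proof. unfold lsum. induction l as [|a l IH]; simpl; [ring|]. rewrite IH. ring. Qed.

Lemma lsum_scal {A} (l : list A) (c : R) (f : A -> R) :
  lsum l (fun x => c * f x) = c * lsum l f.
Proof. unfold lsum. induction l as [|a l IH]; simpl; [ring|]. rewrite IH. ring. Qed.

Lemma lsum_mul_r {A} (l : list A) (f : A -> R) (c : R) :
  lsum l f * c = lsum l (fun x => f x * c).
Proof. unfold lsum. induction l as [|a l IH]; simpl; [ring|]. rewrite <- IH. ring. Qed.

Lemma lsum_ext {A} (l : list A) (f g : A -> R) :
  (forall x, In x l -> f x = g x) -> lsum l f = lsum l g.
Proof.
  unfold lsum. induction l as [|a l IH]; simpl; intros H; auto.
  rewrite H, IH; auto.
Qed.

Lemma lsum_0 {A} (l : list A) : lsum l (fun _ => 0) = 0.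
Proof. unfold lsum. induction l as [|a l IH]; simpl; [|rewrite IH]; ring. Qed.

Lemma lsum_le {A} (l : list A) (f g : A -> R) :
  (forall x, In x l -> f x <= g x) -> lsum l f <= lsum l g.
Proof.
  unfold lsum. induction l as [|a l IH]; simpl; intros H; [lra|].
  apply Rplus_le_compat; auto.
Qed.

Lemma lsum_nonneg {A} (l : list A) (f : A -> R) :
  (forall x, In x l -> 0 <= f x) -> 0 <= lsum l f.
Proof.
  intros H. rewrite <- (lsum_0 l). apply lsum_le, H.
Qed.

Lemma lsum_swap {A B} (l1 : list A) (l2 : list B) (g : A -> B -> R) :
  lsum l1 (fun a => lsum l2 (g a)) = lsum l2 (fun b => lsum l1 (fun a => g a b)).
Proof.
  induction l1 as [|a l1 IH].
  - symmetry. apply lsum_0.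
  - change (lsum l2 (g a) + lsum l1 (fun a => lsum l2 (g a)) =
            lsum l2 (fun b => g a b + lsum l1 (fun a => g a b))).
    rewrite IH, lsum_plus. reflexivity.
Qed.

Lemma lsum_list_prod {A B} (l1 : list A) (l2 : list B) (g : A -> B -> R) :
  lsum l1 (fun a => lsum l2 (g a)) = lsum (list_prod l1 l2) (fun x => g (fst x) (snd x)).
Proof.
  induction l1 as [|a l1 IH]; [reflexivity|].
  simpl list_prod. rewrite lsum_app, <- IH.
  change (lsum (a :: l1) ?f) with (f a + lsum l1 f).
  f_equal. unfold lsum. rewrite map_map. reflexivity.
Qed.

Lemma NoDup_list_prod {A B} (l1 : list A) (l2 : list B) :
  NoDup l1 -> NoDup l2 -> NoDup (list_prod l1 l2).
Proof.
  intros H1 H2. induction H1 as [|a l1 Ha Hl1 IH]; simpl; [constructor|].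
  apply NoDup_app; auto.
  - apply NoDup_map_NoDup_ForallPairs; auto. intros x y _ _ E. now inversion E.
  - intros [x y] Hx Hy. apply in_map_iff in Hx as [z [Ez _]]. inversion Ez; subst.
    apply in_prod_iff in Hy. tauto.
Qed.

Lemma lsum_le_inj {A B} (l : list A) (l' : list B) (P : A -> Prop)
    (h : A -> R) (F : B -> R) (phi : A -> B) :
  NoDup l ->
  (forall x, In x l -> ~ P x -> h x = 0) ->
  (forall x, In x l -> P x -> h x <= F (phi x) /\ In (phi x) l') ->
  (forall x y, In x l -> In y l -> P x -> P y -> phi x = phi y -> x = y) ->
  (forall y, In y l' -> 0 <= F y) ->
  lsum l h <= lsum l' F.
Proof.
  intros Hnd. revert l'. induction Hnd as [|a l Ha Hl IH];
    intros l' Hzero Hmap Hinj HF; [apply lsum_nonneg; auto|].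
  change (h a + lsum l h <= lsum l' F).
  destruct (classic (P a)) as [Pa|Pa].
  - destruct (Hmap a (or_introl eq_refl) Pa) as [Hle Hin].
    apply in_split in Hin as [l1 [l2 ->]].
    rewrite lsum_app. change (lsum (phi a :: l2) F) with (F (phi a) + lsum l2 F).
    enough (lsum l h <= lsum (l1 ++ l2) F) by (rewrite lsum_app in *; lra).
    apply IH.
    + intros x Hx. apply Hzero. now right.
    + intros x Hx Px. destruct (Hmap x (or_intror Hx) Px) as [Hlx Hinx].
      split; auto. apply in_app_or in Hinx as [|[E|]]; apply in_or_app; auto.
      exfalso. apply Ha. rewrite (Hinj a x); simpl; auto.
    + intros x y Hx Hy. apply Hinj; now right.
    + intros y Hy. apply HF. apply in_app_or in Hy as [|]; apply in_or_app; simpl; auto.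
  - rewrite Hzero by (simpl; auto). rewrite Rplus_0_l.
    apply IH; auto; intros; [apply Hzero | apply Hmap | apply Hinj]; simpl; auto.
Qed.

Definition Zrange (a b : Z) : list Z :=
  map (fun k => (a + Z.of_nat k)%Z) (seq 0 (Z.to_nat (b - a + 1))).

Lemma sumZ_lsum (a b : Z) (f : Z -> R) : sumZ a b f = lsum (Zrange a b) f.
Proof. unfold sumZ, lsum, Zrange. rewrite map_map. reflexivity. Qed.

Lemma In_Zrange (a b x : Z) : In x (Zrange a b) <-> (a <= x <= b)%Z.
Proof.
  unfold Zrange. rewrite in_map_iff. split.
  - intros [k [<- Hk]]. apply in_seq in Hk. lia.
  - intros Hx. exists (Z.to_nat (x - a)). split; [lia|]. apply in_seq. lia.
Qed.

Lemma NoDup_Zrange (a b : Z) : NoDup (Zrange a b).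
Proof.
  apply NoDup_map_NoDup_ForallPairs; [|apply seq_NoDup].
  intros x y _ _ E. lia.
Qed.

Lemma In_Zrange_abs (x : Z) (B : R) : IZR (Z.abs x) < B -> In x (Zrange (- up B) (up B)).
Proof.
  intros H. destruct (archimed B) as [HB _]. apply In_Zrange.
  assert (Z.abs x < up B)%Z by (apply lt_IZR; lra). lia.
Qed.

Lemma sumZ_nonneg (a b : Z) (f : Z -> R) : (forall k, 0 <= f k) -> 0 <= sumZ a b f.
Proof. intros H. rewrite sumZ_lsum. apply lsum_nonneg. auto. Qed.

Lemma ind_true (P : Prop) (x : R) : P -> Defs.ind P x = x.
Proof. unfold Defs.ind. destruct (excluded_middle_informative P); tauto. Qed.

Lemma ind_false (P : Prop) (x : R) : ~ P -> Defs.ind P x = 0.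
Proof. unfold Defs.ind. destruct (excluded_middle_informative P); tauto. Qed.

Lemma ind_nonneg (P : Prop) (x : R) : 0 <= x -> 0 <= Defs.ind P x.
Proof. unfold Defs.ind. destruct (excluded_middle_informative P); lra. Qed.

Lemma ind_mul (P : Prop) (x : R) : Defs.ind P x = Defs.ind P 1 * x.
Proof. unfold Defs.ind. destruct (excluded_middle_informative P); ring. Qed.

Lemma lsum_ind {A} (l : list A) (P : Prop) (f : A -> R) :
  lsum l (fun x => Defs.ind P (f x)) = Defs.ind P (lsum l f).
Proof.
  rewrite (ind_mul P (lsum l f)), <- lsum_scal.
  apply lsum_ext. intros x _. apply ind_mul.
Qed.

Lemma lsum_div {A} (l : list A) (c : R) (f : A -> R) :
  lsum l (fun x => f x / c) = lsum l f / c.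
Proof.
  unfold Rdiv. rewrite Rmult_comm, <- lsum_scal.
  apply lsum_ext. intros x _. ring.
Qed.

Lemma prime_sum_le_1 (L : R) (f : R -> R) : L <= 1 -> prime_sum L f = 0.
Proof.
  intros HL. unfold prime_sum. rewrite sumZ_lsum, <- (lsum_0 (Zrange 0 (up (sqrt (2 * L))))).
  apply lsum_ext. intros p _. apply ind_false. intros [Hp [_ Hp2]].
  pose proof (prime_ge_2 _ Hp) as H2. apply IZR_le in H2.
  destruct (Rle_lt_dec (2 * L) 0) as [Hneg|Hpos].
  - rewrite sqrt_neg_0 in Hp2 by lra. lra.
  - pose proof (sqrt_sqrt (2 * L) ltac:(lra)). nra.
Qed.

Definition fund_disc_range (M : R) (m : Z) : Prop := M <= IZR (Z.abs m) < 2 * M /\ fund_disc m.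

Definition prime_range (L : R) (p : Z) : Prop := prime p /\ sqrt L <= IZR p <= sqrt (2 * L).

Definition char_sum_pow4 (G : R -> R) (N t : R) (m : Z) : R := Cmod (char_sum G m N t) ^ 4.

Lemma prime_range_sq_bounds (L : R) (p : Z) : 0 < L -> prime_range L p ->
  L <= IZR p * IZR p <= 2 * L.
Proof.
  intros HL [_ [H1 H2]]. pose proof (sqrt_pos L).
  pose proof (sqrt_sqrt L ltac:(lra)). pose proof (sqrt_sqrt (2 * L) ltac:(lra)).
  split; nra.
Qed.

Lemma mul_sq_abs_range (M L : R) (m p : Z) : 0 < L -> fund_disc_range M m -> prime_range L p ->
  M * L <= IZR (Z.abs (m * (p * p))) < 2 * (2 * M * L).
Proof.
  intros HL [[Hm1 Hm2] _] Hp. pose proof (prime_range_sq_bounds L p HL Hp) as [H1 H2].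
  rewrite Z.abs_mul, (Z.abs_eq (p * p)), !mult_IZR by nia.
  split; nra.
Qed.

Lemma char_sum_pow4_ind_le (G : R -> R) (M L N t : R) (m p : Z) : admissible_G G -> 0 < N ->
  Defs.ind (fund_disc_range M m) (char_sum_pow4 G N t m) * Defs.ind (prime_range L p) 1 <=
  8 * (Defs.ind (fund_disc_range M m /\ prime_range L p) (char_sum_pow4 G N t (m * (p * p))) +
       Defs.ind (prime_range L p)
         (Defs.ind (fund_disc_range M m) (char_sum_pow4 G (N / IZR p) t m) / IZR p ^ 2)).
Proof.
  intros HG HN.
  destruct (classic (fund_disc_range M m /\ prime_range L p)) as [[Hm Hp]|Hmp].
  - rewrite !ind_true, Rmult_1_r by auto.
    pose proof (prime_ge_2 _ (proj1 Hp)).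
    pose proof (char_sum_pow4_le G m N t (Z.to_nat p) HG HN) as Hb.
    rewrite Z2Nat.id, INR_IZR_INZ, Z2Nat.id in Hb by lia.
    apply Hb, Hp.
  - assert (~ fund_disc_range M m \/ ~ prime_range L p) as [Hm|Hp] by tauto.
    + rewrite !(ind_false (fund_disc_range M m)), (ind_false (_ /\ _)) by tauto.
      unfold Rdiv. rewrite !Rmult_0_l, (ind_mul _ 0). lra.
    + rewrite !(ind_false (prime_range L p)), (ind_false (_ /\ _)) by tauto. lra.
Qed.

Lemma sum_mul_sq_le_S_all (G : R -> R) (M L N t : R) : 0 < L ->
  lsum (Zrange (- up (2 * M)) (up (2 * M))) (fun m =>
    lsum (Zrange 0 (up (sqrt (2 * L)))) (fun p =>
      Defs.ind (fund_disc_range M m /\ prime_range L p) (char_sum_pow4 G N t (m * (p * p)))))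
  <= S_all G (M * L) N t + S_all G (2 * M * L) N t.
Proof.
  intros HL. rewrite lsum_list_prod.
  set (ns1 := fun n => M * L <= IZR (Z.abs n) < 2 * (M * L) /\ ~ perfect_square n).
  set (ns2 := fun n => 2 * M * L <= IZR (Z.abs n) < 2 * (2 * M * L) /\ ~ perfect_square n).
  assert (Hnn : forall P n, 0 <= Defs.ind P (char_sum_pow4 G N t n))
    by (intros; apply ind_nonneg, pow_le, Cmod_ge_0).
  unfold S_all. rewrite !sumZ_lsum.
  apply Rle_trans with (lsum (Zrange (- up (2 * (2 * M * L))) (up (2 * (2 * M * L))))
    (fun n => Defs.ind (ns1 n) (char_sum_pow4 G N t n) + Defs.ind (ns2 n) (char_sum_pow4 G N t n))).
  - apply lsum_le_inj with (P := fun x => fund_disc_range M (fst x) /\ prime_range L (snd x))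
                           (phi := fun x => (fst x * (snd x * snd x))%Z).
    + apply NoDup_list_prod; apply NoDup_Zrange.
    + intros x _ Hx. apply ind_false, Hx.
    + intros [m p] _ [Hm Hp]. simpl. rewrite ind_true by auto.
      pose proof (mul_sq_abs_range M L m p HL Hm Hp) as Hr.
      split; [|apply In_Zrange_abs; lra].
      assert (~ perfect_square (m * (p * p)))
        by (apply fund_disc_mul_sq_not_square; [apply Hm | apply Hp]).
      pose proof (Hnn (ns1 (m * (p * p))%Z) (m * (p * p))%Z).
      pose proof (Hnn (ns2 (m * (p * p))%Z) (m * (p * p))%Z).
      destruct (Rlt_le_dec (IZR (Z.abs (m * (p * p)))) (2 * (M * L))).
      * rewrite (ind_true (ns1 _)) by (split; auto; lra). lra.
      * rewrite (ind_true (ns2 _)) by (split; auto; lra). lra.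
    + intros [m1 p1] [m2 p2] _ _ [Hm1 Hp1] [Hm2 Hp2] E.
      destruct (fund_disc_mul_sq_inj m1 m2 p1 p2 (proj2 Hm1) (proj2 Hm2) (proj1 Hp1) (proj1 Hp2) E).
      subst. reflexivity.
    + intros n _. apply Rplus_le_le_0_compat; apply Hnn.
  - rewrite lsum_plus. apply Rplus_le_compat_r.
    apply lsum_le_inj with (P := ns1) (phi := fun n => n); auto using NoDup_Zrange.
    + intros n _ Hn. apply ind_false, Hn.
    + intros n _ Hn. split; [right; reflexivity | apply In_Zrange_abs, Hn].
    + intros n _. apply Hnn.
Qed.

Lemma sum_N_div_p_eq_prime_sum (G : R -> R) (M L N t : R) :
  lsum (Zrange (- up (2 * M)) (up (2 * M))) (fun m =>
    lsum (Zrange 0 (up (sqrt (2 * L)))) (fun p =>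
      Defs.ind (prime_range L p)
        (Defs.ind (fund_disc_range M m) (char_sum_pow4 G (N / IZR p) t m) / IZR p ^ 2)))
  = prime_sum L (fun p => S_flat G M (N / p) t / p ^ 2).
Proof.
  rewrite lsum_swap. unfold prime_sum. rewrite sumZ_lsum. apply lsum_ext. intros p _.
  rewrite lsum_ind, lsum_div. unfold S_flat. rewrite sumZ_lsum. reflexivity.
Qed.

Lemma prime_count_mul_S_flat_le (G : R -> R) (M L N t : R) :
  admissible_G G -> 0 < L -> 0 < N ->
  prime_count L * S_flat G M N t <=
  8 * (S_all G (M * L) N t + S_all G (2 * M * L) N t +
       prime_sum L (fun p => S_flat G M (N / p) t / p ^ 2)).
Proof.
  intros HG HL HN.
  rewrite <- sum_N_div_p_eq_prime_sum.
  eapply Rle_trans; [|apply Rmult_le_compat_l, Rplus_le_compat_r, sum_mul_sq_le_S_all; lra].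
  rewrite <- lsum_plus, <- lsum_scal.
  unfold S_flat, prime_count, prime_sum. rewrite !sumZ_lsum.
  rewrite Rmult_comm, lsum_mul_r. apply lsum_le. intros m _.
  rewrite <- lsum_plus, <- !lsum_scal. apply lsum_le. intros p _.
  apply char_sum_pow4_ind_le; auto.
Qed.

Lemma Rle_div_of_mul_le (a K S X : R) : 0 < a -> a < K -> 0 <= S -> K * S <= X ->
  S <= X / a.
Proof.
  intros Ha HK HS HX. apply Rmult_le_reg_l with a; [exact Ha|].
  replace (a * (X / a)) with X by (field; lra). nra.
Qed.

(* At L = 1 the hypothesis reads 0 > 1 / (2 * 0), and 1 / 0 = 0 in Rocq. *)
Lemma prime_count_bound_gt_1 (L0 L : R) :
  (forall L', L0 <= L' -> prime_count L' > sqrt L' / (2 * ln L')) -> L0 <= L -> 1 < L.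
Proof.
  intros Hcount HL. destruct (Rle_lt_dec L 1) as [HL1|]; auto.
  specialize (Hcount 1 ltac:(lra)).
  unfold prime_count in Hcount.
  rewrite prime_sum_le_1, ln_1, Rmult_0_r, Rdiv_0_r in Hcount by lra.
  lra.
Qed.

Theorem lemma3p1 :
  exists C : R, 0 < C /\
  forall (G : R -> R), admissible_G G ->
  forall L0 : R,
    (forall L : R, L0 <= L -> prime_count L > sqrt L / (2 * ln L)) ->
  forall (L M N t : R), L0 <= L -> 0 < M -> 0 < N ->
    S_flat G M N t <=
      C * (ln L / sqrt L) *
      (S_all G (M * L) N t + S_all G (2 * M * L) N t +
       prime_sum L (fun p => S_flat G M (N / p) t / p ^ 2)).
Proof.
  exists 16. split; [lra|].
  intros G HG L0 Hcount L M N t HL _ HN.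
  pose proof (prime_count_bound_gt_1 L0 L Hcount HL) as HL1.
  assert (Hln : 0 < ln L) by (rewrite <- ln_1; apply ln_increasing; lra).
  assert (Hsqrt : 0 < sqrt L) by (apply sqrt_lt_R0; lra).
  eapply Rle_trans.
  - apply (Rle_div_of_mul_le (sqrt L / (2 * ln L)) (prime_count L)).
    + apply Rdiv_lt_0_compat; lra.
    + apply Hcount, HL.
    + apply sumZ_nonneg. intros. apply ind_nonneg, pow_le, Cmod_ge_0.
    + apply prime_count_mul_S_flat_le; auto. lra.
  - right. field. lra.
Qed.
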